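(* Let $k$ and $n$ be positive integers, and let $\mathcal{P}$ be a partition of $\mathbb{R}^k$ into polytopes. Then there exist a polytope $P_0\in\mathcal{P}$ and a point $\mathbf{w}=(w_1,\dots,w_n)\in(0,1)^n$ such that $w_1>w_2>\dots>w_n$ and, for every ascending $k$-tuple of indices $1\le i_1<\dots<i_k\le n$, the point $(w_{i_1},\dots,w_{i_k})$ lies in the interior of $P_0$.
   Context: A (closed, convex) polytope in $\mathbb{R}^k$ is a set of the form $\{\mathbf{x}\in\mathbb{R}^k : \mathbf{a}_j\cdot\mathbf{x}+b_j\ge 0,\ j=1,\dots,J\}$ for finitely many $\mathbf{a}_j\in\mathbb{R}^k$, $b_j\in\mathbb{R}$ (not necessarily bounded). A partition of $\mathbb{R}^k$ is a finite collection of polytopes, each with nonempty interior, whose union is $\mathbb{R}^k$ and whose interiors are pairwise disjoint. *)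

From HB Require Import structures.
From mathcomp Require Import all_boot all_order all_algebra.
From mathcomp Require Import all_classical all_reals all_analysis.
Set Implicit Arguments. Unset Strict Implicit. Unset Printing Implicit Defensive.
Import Order.TTheory GRing.Theory Num.Theory numFieldTopology.Exports numFieldNormedType.Exports.
Local Open Scope classical_set_scope.
Local Open Scope ring_scope.

(* Points of R^k are row vectors 'rV[R]_k, with the product (= Euclidean) topology. *)

Definition polytope (R : realType) (k : nat) (P : set 'rV[R]_k) : Prop :=
  exists (J : nat) (a : 'I_J -> 'rV[R]_k) (b : 'I_J -> R),
    P = [set x | forall j : 'I_J, 0 <= \sum_(i < k) a j 0 i * x 0 i + b j].

Definition polytope_partition (R : realType) (k m : nat)
    (P : 'I_m -> set 'rV[R]_k) : Prop :=
  [/\ (forall i, polytope (P i)),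
      (forall i, interior (P i) !=set0),
      \bigcup_(i in setT) P i = setT
    & (forall i j, i != j -> interior (P i) `&` interior (P j) = set0)].

From HB Require Import structures.
From mathcomp Require Import all_boot all_order all_algebra.
From mathcomp Require Import all_classical all_reals all_analysis.
From mathcomp Require Import lra.
Import Order.TTheory GRing.Theory Num.Theory.
Import numFieldTopology.Exports numFieldNormedType.Exports.
Set Implicit Arguments. Unset Strict Implicit. Unset Printing Implicit Defensive.
Local Open Scope classical_set_scope.
Local Open Scope ring_scope.

(* Take w_j = x^(j+1) for a small x > 0.  At the point (w_(i_1), ..., w_(i_k)) an
   affine form a.y + b takes the value b + a_1 x^(i_1+1) + ... + a_k x^(i_k+1):
   whatever the indices, the exponents increase along the coefficient list
   (b, a_1, ..., a_k), so for x below a threshold independent of the indices its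
   sign is that of the first nonzero coefficient.  Hence, for small x, each polytope
   of the partition contains either all these points in its interior or none of
   them, and one of them contains some such point because the partition covers. *)

Definition increasing r (e : 'I_r -> nat) := {homo e : t u / (t < u)%N}.

Definition affine_form (R : pzSemiRingType) k (a : 'rV[R]_k) (b : R) (y : 'rV[R]_k) : R :=
  \sum_i a 0 i * y 0 i + b.

Definition pow_row (R : pzSemiRingType) k (x : R) (e : 'I_k -> nat) : 'rV[R]_k :=
  \row_t x ^+ (e t).+1.

Lemma lacunary_sum_lead_sign (R : realFieldType) r (c : 'I_r -> R)
    (e : 'I_r -> nat) (t0 : 'I_r) (x : R) :
  increasing e ->
  (forall t : 'I_r, (t < t0)%N -> c t = 0) -> c t0 != 0 ->
  0 < x -> x <= 1 -> x * \sum_t `|c t| < `|c t0| ->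
  0 < c t0 * \sum_t c t * x ^+ e t.
Proof.
move=> e_incr c_lt_t0 ct0_neq0 x_gt0 x_le1 x_small.
set S := \sum_t `|c t|; set y := x ^+ e t0.
have ct0_gt0 : 0 < `|c t0| by rewrite normr_gt0.
have y_gt0 : 0 < y by rewrite exprn_gt0.
have term_le t : t != t0 -> `|c t * x ^+ e t| <= y * x * `|c t|.
  move=> t_neq; have [t_lt|t_ge] := ltnP t t0.
    by rewrite c_lt_t0 // mul0r normr0 mulr0.
  have t_gt : (t0 < t)%N.
    by rewrite ltn_neqAle t_ge andbT; apply: contra t_neq => /eqP/val_inj->.
  rewrite normrM (ger0_norm (exprn_ge0 _ (ltW x_gt0))) mulrC.
  by apply: ler_wpM2r => //; rewrite -exprSr ler_wiXn2l ?e_incr // ltW.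
rewrite (bigD1 t0) //= mulrDr.
set D := \sum_(t | t != t0) _.
have D_le : `|D| <= y * x * S.
  rewrite (le_trans (ler_norm_sum _ _ _)) // (le_trans (ler_sum _ term_le)) //.
  rewrite -mulr_sumr; apply: ler_wpM2l; first by rewrite mulr_ge0 ?ltW.
  by rewrite [leRHS](bigD1 t0) //= lerDr.
have cD_ge : - (`|c t0| * (y * x * S)) <= c t0 * D.
  rewrite lerNl -mulrN (le_trans (ler_norm _)) // normrM normrN.
  by apply: ler_wpM2l; first exact: ltW.
have lead_eq : c t0 * (c t0 * y) = `|c t0| * `|c t0| * y.
  by rewrite mulrA -!expr2 real_normK ?num_real.
have lead_gap : 0 < `|c t0| * y * (`|c t0| - x * S) by rewrite !mulr_gt0 // subr_gt0.
rewrite lead_eq; lra.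
Qed.

Lemma affine_form_pow_row_sign_near0 (R : realType) k (a : 'rV[R]_k) (b : R) :
  [\/ a = 0 /\ b = 0,
      \forall x \near 0^'+, forall e, increasing e -> 0 < affine_form a b (pow_row x e)
    | \forall x \near 0^'+, forall e, increasing e -> affine_form a b (pow_row x e) < 0].
Proof.
pose c (t : 'I_k.+1) := if unlift ord0 t is Some i then a 0 i else b.
have [c_eq0|/existsNP[t1 /eqP ct1_neq0]] := pselect (forall t, c t = 0).
  apply: Or31; split; last by have := c_eq0 ord0; rewrite /c unlift_none.
  by apply/rowP => i; rewrite mxE; have := c_eq0 (lift ord0 i); rewrite /c liftK.
pose t0 := [arg min_(t < t1 | c t != 0) (t : nat)].
have [ct0_neq0 c_lt_t0] : c t0 != 0 /\ forall t : 'I_k.+1, (t < t0)%N -> c t = 0.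
  rewrite /t0; case: arg_minnP => // t ct_neq0 t_min; split => // u u_lt.
  by apply/eqP; apply: contraTT u_lt => cu_neq0; rewrite -leqNgt t_min.
pose S := \sum_t `|c t|.
have near_pos : \forall x \near 0^'+, forall e, increasing e ->
    0 < c t0 * affine_form a b (pow_row x e).
  have delta_gt0 : 0 < `|c t0| / (S + 1).
    by rewrite divr_gt0 ?normr_gt0 // ltr_wpDl ?sumr_ge0.
  near=> x => e e_incr.
  pose e' (t : 'I_k.+1) := if unlift ord0 t is Some i then (e i).+1 else 0%N.
  have -> : affine_form a b (pow_row x e) = \sum_t c t * x ^+ e' t.
    rewrite big_ord_recl /c /e' unlift_none expr0 mulr1 addrC.
    by congr (_ + _); apply: eq_bigr => i _; rewrite liftK mxE.
  have x_gt0 : 0 < x by near: x; exact: nbhs_right_gt.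
  apply: (lacunary_sum_lead_sign _ c_lt_t0) => //.
  - move=> t u; rewrite /e'.
    case: (unliftP ord0 t) => [t'|] ->; case: (unliftP ord0 u) => [u'|] -> //=.
    by rewrite ltnS; apply: e_incr.
  - by apply: ltW; near: x; apply: nbhs_right_lt; exact: ltr01.
  - have : x < `|c t0| / (S + 1) by near: x; exact: nbhs_right_lt.
    rewrite ltr_pdivlMr ?ltr_wpDl ?sumr_ge0 //; apply: le_lt_trans.
    by apply: ler_wpM2l; [exact: ltW | rewrite /S lerDl].
have [ct0_gt0|ct0_le0] := ltP 0 (c t0).
  apply: Or32; apply: filterS near_pos => x pos e e_incr.
  by rewrite -(pmulr_rgt0 _ ct0_gt0) pos.
apply: Or33; apply: filterS near_pos => x pos e e_incr.
have ct0_lt0 : c t0 < 0 by rewrite lt_neqAle ct0_neq0.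
by rewrite -(nmulr_rgt0 _ ct0_lt0) pos.
Unshelve. all: by end_near.
Qed.

Lemma affine_form_continuous (R : realType) k (a : 'rV[R]_k) (b : R) :
  continuous (affine_form a b).
Proof.
move=> y; rewrite /affine_form; apply: continuousD; last exact: cst_continuous.
apply: (continuous_big add_continuous) => i _ z.
by apply: continuousM; [exact: cst_continuous | exact: coord_continuous].
Qed.

Lemma interior_halfspaces (R : realType) k J (a : 'I_J -> 'rV[R]_k) (b : 'I_J -> R)
    (x : 'rV[R]_k) :
  (forall j, (a j = 0 /\ b j = 0) \/ 0 < affine_form (a j) (b j) x) ->
  interior [set y | forall j, 0 <= affine_form (a j) (b j) y] x.
Proof.
move=> active; rewrite /interior /=.
apply: (@filter_forall _ _ (fun j => [set y | 0 <= affine_form (a j) (b j) y]) (nbhs x)).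
move=> j; case: (active j) => [[-> ->]|f_gt0].
  by near=> y; rewrite /= /affine_form addr0 big1 // => i _; rewrite mxE mul0r.
exact: (@cvgr_ge _ _ (nbhs x) _ _ _ (@affine_form_continuous _ _ (a j) (b j) x) _ f_gt0).
Unshelve. all: by end_near.
Qed.

Lemma polytope_pow_row_dichotomy (R : realType) k (Q : set 'rV[R]_k) :
  polytope Q ->
  \forall x \near 0^'+,
    (forall e, increasing e -> interior Q (pow_row x e)) \/
    (forall e, increasing e -> ~ Q (pow_row x e)).
Proof.
move=> [J [a [b ->]]].
pose f j x e := affine_form (a j) (b j) (pow_row x e).
pose sign_stable j x := [\/ a j = 0 /\ b j = 0,
  forall e, increasing e -> 0 < f j x e
  | forall e, increasing e -> f j x e < 0].
have : \forall x \near 0^'+, forall j, sign_stable j x.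
  apply: (@filter_forall _ _ sign_stable) => j.
  case: (affine_form_pow_row_sign_near0 (a j) (b j)) => [zero|pos|neg].
  - by near=> x; apply: Or31.
  - by apply: filterS pos => x; rewrite /sign_stable; apply: Or32.
  - by apply: filterS neg => x; rewrite /sign_stable; apply: Or33.
apply: filterS => x stable.
have [[j neg_j]|no_neg] := pselect (exists j, forall e, increasing e -> f j x e < 0).
  by right=> e e_incr /= /(_ j); rewrite leNgt neg_j.
left=> e e_incr; apply: interior_halfspaces => j.
case: (stable j) => [zero|pos|neg].
- by left.
- by right; apply: pos.
- by case: no_neg; exists j.
Unshelve. all: by end_near.
Qed.

Theorem theorem3p2 (R : realType) (k n m : nat) (hk : (0 < k)%N) (hn : (0 < n)%N)
    (P : 'I_m -> set 'rV[R]_k) :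
  polytope_partition P ->
  exists (i0 : 'I_m) (w : 'rV[R]_n),
    (forall i : 'I_n, 0 < w 0 i < 1) /\
    (forall i j : 'I_n, (i < j)%N -> w 0 j < w 0 i) /\
    (forall s : 'I_k -> 'I_n, (forall a b : 'I_k, (a < b)%N -> (s a < s b)%N) ->
       interior (P i0) (\row_(t < k) w 0 (s t))).
Proof.
move=> [P_poly _ P_cover _].
have near_unit : \forall x \near (0 : R)^'+, 0 < x < 1.
  near=> x; apply/andP; split; near: x.
  - exact: nbhs_right_gt.
  - exact: nbhs_right_lt ltr01.
have near_dichotomy := filter_forall (at_right_proper_filter 0)
  (fun i => polytope_pow_row_dichotomy (P_poly i)).
have [x [/andP [x_gt0 x_lt1] dichotomy]] := filter_ex (filterI near_unit near_dichotomy).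
have [i0 _ P_i0] : (\bigcup_(i in setT) P i) (pow_row x val) by rewrite P_cover.
have inside : forall e, increasing e -> interior (P i0) (pow_row x e).
  case: (dichotomy i0) => [//|outside].
  by case: (outside val (fun _ _ tu => tu) P_i0).
exists i0, (\row_(j < n) x ^+ j.+1); split; [|split].
- by move=> i; rewrite mxE exprn_gt0 // exprn_ilt1 // ltW.
- by move=> i j ij; rewrite !mxE ltr_iXn2l.
- move=> s s_incr; have -> : \row_(t < k) (\row_(j < n) x ^+ j.+1) 0 (s t) = pow_row x s.
    by apply/rowP => t; rewrite !mxE.
  exact: inside.
Unshelve. all: by end_near.
Qed.
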